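(* Let $R=K[X_1,\dots,X_d]$ be a polynomial ring over a field $K$, $f$ a nonzero polynomial in $R$, and $\mathcal{J}_f=\bigcap_{n\ge1}\sqrt{J_{f^n}}$. Then $I:_R(f)^\infty=I:_R\mathcal{J}_f^\infty$ for all monomial ideals $I$ of $R$.
   Context: For a nonzero polynomial $g=\sum_{\mathbf{n}}a_{\mathbf{n}}X_1^{n_1}\cdots X_d^{n_d}$, $J_g$ is the monomial ideal generated by the monomials occurring in $g$ with nonzero coefficient. $I:_RJ^\infty=\bigcup_k(I:_RJ^k)$. *)

From HB Require Import structures.
From mathcomp Require Import all_boot all_order all_algebra.
From mathcomp Require Import mpoly.

Set Implicit Arguments.
Unset Strict Implicit.
Unset Printing Implicit Defensive.

Import GRing.Theory.
Local Open Scope ring_scope.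

Section Ideals.
Variable R : comRingType.

Definition is_ideal (I : R -> Prop) : Prop :=
  [/\ I 0, (forall x y, I x -> I y -> I (x + y)) &
      (forall r x, I x -> I (r * x))].

Definition gen_ideal (S : R -> Prop) : R -> Prop :=
  fun x => forall J, is_ideal J -> (forall s, S s -> J s) -> J x.

Definition principal (f : R) : R -> Prop := gen_ideal (fun x => x = f).

Definition radical (I : R -> Prop) : R -> Prop := fun x => exists n : nat, I (x ^+ n).

Definition ideal_mul (I J : R -> Prop) : R -> Prop :=
  gen_ideal (fun x => exists a b, [/\ I a, J b & x = a * b]).

Fixpoint ideal_pow (J : R -> Prop) (k : nat) : R -> Prop :=
  match k with
  | 0 => fun _ => True
  | k'.+1 => ideal_mul (ideal_pow J k') J
  end.

Definition colon (I J : R -> Prop) : R -> Prop :=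
  fun x => forall y, J y -> I (x * y).

Definition saturation (I J : R -> Prop) : R -> Prop :=
  fun x => exists k : nat, colon I (ideal_pow J k) x.

End Ideals.

Section Monomial.
Variables (K : fieldType) (d : nat).

Definition monomial_ideal (I : {mpoly K[d]} -> Prop) : Prop :=
  exists S : 'X_{1..d} -> Prop,
    forall x, I x <-> gen_ideal (fun p => exists2 m, S m & p = 'X_[m]) x.

Definition Jmon (g : {mpoly K[d]}) : {mpoly K[d]} -> Prop :=
  gen_ideal (fun p => exists2 m, m \in msupp g & p = 'X_[m]).

Definition calJ (f : {mpoly K[d]}) : {mpoly K[d]} -> Prop :=
  fun x => forall n : nat, (1 <= n)%N -> radical (Jmon (f ^+ n)) x.

End Monomial.

(* The inclusion (f) ⊆ 𝒥_f gives one direction.  Conversely, let x f^k ∈ I.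
   For S ⊆ {1..d} grade R by the weight w_S(m) = Σ_{i∈S} m_i; the weight-0 part
   of a polynomial is its residue modulo the monomial prime P_S = (X_i : i ∈ S).
   If f ∉ P_S, comparing lowest-weight parts shows that f is a nonzerodivisor
   modulo the monomial ideal I : (Π_{i∉S} X_i)^∞, so x (Π_{i∉S} X_i)^N ∈ I for
   some N, which can be taken uniform in S.  If f ∈ P_S then 𝒥_f ⊆ √J_f ⊆ P_S,
   so every monomial u of a product of dN+1 elements of 𝒥_f has w_S(u) > dN for
   all such S.  For S = {i : u_i < N} this forces f ∉ P_S, and then
   (Π_{i∉S} X_i)^N divides u, whence x u ∈ I. *)

From HB Require Import structures.
From mathcomp Require Import all_boot all_order all_algebra.
From mathcomp Require Import mpoly.
From Stdlib Require Import ClassicalEpsilon.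

Set Implicit Arguments.
Unset Strict Implicit.
Unset Printing Implicit Defensive.

Import GRing.Theory.
Local Open Scope ring_scope.

Section IdealTheory.
Variable R : comNzRingType.
Implicit Types (I J A B S T : R -> Prop) (x y f : R).

Lemma gen_ideal_is_ideal S : is_ideal (gen_ideal S).
Proof.
split=> [J [J0 _ _] _ //|x y Sx Sy J idJ SJ|r x Sx J idJ SJ]; case: (idJ) => _ JD JM.
- by apply: JD; [apply: Sx | apply: Sy].
- by apply: JM; apply: Sx.
Qed.

Lemma mem_gen_ideal S x : S x -> gen_ideal S x.
Proof. by move=> Sx J _; apply. Qed.

Lemma gen_ideal_mono S T x : (forall y, S y -> T y) -> gen_ideal S x -> gen_ideal T x.
Proof.
move=> ST; apply; first exact: gen_ideal_is_ideal.
by move=> y /ST; apply: mem_gen_ideal.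
Qed.

Lemma ideal_mulr I x r : is_ideal I -> I x -> I (x * r).
Proof. by case=> _ _ IM Ix; rewrite mulrC; apply: IM. Qed.

Lemma ideal_sum I (V : eqType) (s : seq V) (F : V -> R) :
  is_ideal I -> {in s, forall t, I (F t)} -> I (\sum_(t <- s) F t).
Proof.
case=> I0 ID _; elim: s => [|t s IHs] Is; first by rewrite big_nil.
rewrite big_cons; apply: ID; first by apply: Is; rewrite mem_head.
by apply: IHs => u su; apply: Is; rewrite in_cons su orbT.
Qed.

Lemma ideal_mul_mono I I' A A' x :
  (forall y, I y -> I' y) -> (forall y, A y -> A' y) ->
  ideal_mul I A x -> ideal_mul I' A' x.
Proof.
move=> II' AA'; apply: gen_ideal_mono => _ [a [b [Ia Ab ->]]].
by exists a, b; split; [apply: II' | apply: AA' |].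
Qed.

Lemma ideal_pow_mono A B k x :
  (forall y, A y -> B y) -> ideal_pow A k x -> ideal_pow B k x.
Proof.
move=> AB; elim: k x => [//|k IHk] x /=.
by apply: ideal_mul_mono; [apply: IHk | apply: AB].
Qed.

Lemma colon_pow0 I J x : is_ideal I -> I x -> colon I (ideal_pow J 0) x.
Proof. by move=> idI Ix y _; apply: ideal_mulr. Qed.

Lemma colon_powS I J k x : is_ideal I ->
  (forall b, J b -> colon I (ideal_pow J k) (x * b)) ->
  colon I (ideal_pow J k.+1) x.
Proof.
case=> I0 ID IM xJ y /= Jky.
have idIx : is_ideal (fun y => I (x * y)).
  split=> [|u v Iu Iv|r u Iu]; first by rewrite mulr0.
  - by rewrite mulrDr; apply: ID.
  - by rewrite mulrCA; apply: IM.
apply: (Jky _ idIx) => _ [a [b [Jka Jb ->]]].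
by rewrite (mulrC a) mulrA; apply: xJ.
Qed.

Lemma saturation_ext I I' J x :
  (forall y, I y <-> I' y) -> saturation I J x <-> saturation I' J x.
Proof. by move=> II'; split=> -[k Hk]; exists k => y /Hk /II'. Qed.

Lemma principal_multiple f y : principal f y -> exists r, y = r * f.
Proof.
move/(_ (fun y => exists r, y = r * f)); apply; last first.
  by move=> _ ->; exists 1; rewrite mul1r.
split=> [|_ _ [r ->] [s ->]|r _ [s ->]]; first by exists 0; rewrite mul0r.
- by exists (r + s); rewrite mulrDl.
- by exists (r * s); rewrite mulrA.
Qed.

Lemma ideal_pow_principal f k : ideal_pow (principal f) k (f ^+ k).
Proof.
elim: k => [//|k IHk] /=; apply: mem_gen_ideal.
by exists (f ^+ k), f; split; [| apply: mem_gen_ideal | rewrite exprSr].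
Qed.

End IdealTheory.

Lemma common_bound (T : eqType) (s : seq T) (P : T -> nat -> Prop) :
  (forall t N N', (N <= N')%N -> P t N -> P t N') ->
  {in s, forall t, exists N, P t N} -> exists N, {in s, forall t, P t N}.
Proof.
move=> P_mono; elim: s => [|t s IHs] Ps; first by exists 0%N.
have [N PsN] : exists N, {in s, forall u, P u N}.
  by apply: IHs => u su; apply: Ps; rewrite in_cons su orbT.
have [Nt PtN] := Ps t (mem_head t s).
exists (maxn N Nt) => u; rewrite in_cons => /predU1P[->|su].
  exact: P_mono (leq_maxr _ _) PtN.
exact: P_mono (leq_maxl _ _) (PsN u su).
Qed.

Section MonomialFilter.
Variables (n : nat) (R : nzRingType).
Implicit Types (P : pred 'X_{1..n}) (p q : {mpoly R[n]}) (m : 'X_{1..n}).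

(* [pihomog mf k] is [mfilter [pred m | mf m == k]] by definition. *)
Definition mfilter P p : {mpoly R[n]} := \sum_(m <- msupp p | P m) p@_m *: 'X_[m].

Lemma mcoeff_mfilter P p m : (mfilter P p)@_m = if P m then p@_m else 0.
Proof.
rewrite /mfilter raddf_sum /= big_mkcond /=.
under eq_bigr do rewrite mcoeffZ mcoeffX.
have [mp|mNp] := boolP (m \in msupp p).
  rewrite (bigD1_seq m) ?msupp_uniq //= eqxx mulr1 big1 ?addr0 => [|m' /negbTE m'm].
    by case: (P m).
  by rewrite m'm mulr0; case: (P m').
rewrite big1_seq => [|m' /= m'p]; first by rewrite memN_msupp_eq0 //; case: (P m).
have /negbTE -> : m' != m by apply: contraNneq mNp => <-.
by rewrite mulr0; case: (P m').
Qed.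

Lemma msupp_mfilter P p m : (m \in msupp (mfilter P p)) = P m && (m \in msupp p).
Proof. by rewrite !mcoeff_msupp mcoeff_mfilter; case: (P m); rewrite ?eqxx. Qed.

Lemma mfilter_split P p : p = mfilter P p + mfilter (predC P) p.
Proof.
apply/mpolyP => m; rewrite mcoeffD !mcoeff_mfilter /=.
by case: (P m); rewrite ?addr0 ?add0r.
Qed.

Lemma mfilter_eq0 P p : (mfilter P p == 0) = all (predC P) (msupp p).
Proof.
apply/eqP/allP => [Pp0 m mp | allNP] /=.
  by apply/negP => Pm; have := msupp_mfilter P p m; rewrite Pp0 msupp0 Pm mp.
apply/mpolyP => m; rewrite mcoeff_mfilter mcoeff0; case: ifP => // Pm.
by apply: memN_msupp_eq0; apply: contraL Pm => /allNP.
Qed.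

End MonomialFilter.

Section MeasureGrading.
Variables (n : nat) (R : nzRingType) (mf : measure n).
Implicit Types (p q : {mpoly R[n]}) (m : 'X_{1..n}).

Lemma mf_mono : {homo mf : m m' / (m <= m')%MM >-> (m <= m')%N}.
Proof. by move=> m m' le_mm'; rewrite -(submK le_mm') mfD leq_addl. Qed.

Lemma msupp_pihomog k p m :
  (m \in msupp (pihomog mf k p)) = (mf m == k) && (m \in msupp p).
Proof. exact: msupp_mfilter. Qed.

Lemma pihomog_eq0 k p : (pihomog mf k p == 0) = all (fun m => mf m != k) (msupp p).
Proof. exact: mfilter_eq0. Qed.

Lemma mf_msuppM_ge a b p q :
  {in msupp p, forall m, a <= mf m}%N -> {in msupp q, forall m, b <= mf m}%N ->
  {in msupp (p * q), forall m, a + b <= mf m}%N.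
Proof.
move=> lbp lbq _ /msuppM_le/allpairsP[[m1 m2] [/= /lbp le1 /lbq le2 ->]].
by rewrite mfD leq_add.
Qed.

Lemma pihomog_mf_gt k p : {in msupp p, forall m, k < mf m}%N -> pihomog mf k p = 0.
Proof.
move=> gtk; apply/eqP; rewrite pihomog_eq0; apply/allP => m /gtk.
by rewrite /= neq_ltn => ->; rewrite orbT.
Qed.

Lemma pihomogM_min dp dq p q :
  {in msupp p, forall m, dp <= mf m}%N -> {in msupp q, forall m, dq <= mf m}%N ->
  pihomog mf (dp + dq) (p * q) = pihomog mf dp p * pihomog mf dq q.
Proof.
move=> lbp lbq.
have split_low d (r : {mpoly R[n]}) : {in msupp r, forall m, d <= mf m}%N ->
    exists2 r', r = pihomog mf d r + r' & {in msupp r', forall m, d < mf m}%N.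
  move=> lbr; exists (mfilter (predC [pred m | mf m == d]) r); first exact: mfilter_split.
  by move=> m; rewrite msupp_mfilter /= ltn_neqAle eq_sym => /andP[-> /lbr].
have low_ge d (r : {mpoly R[n]}) : {in msupp (pihomog mf d r), forall m, d <= mf m}%N.
  by move=> m; rewrite msupp_pihomog => /andP[/eqP -> _].
have [p' Ep lbp'] := split_low _ _ lbp; have [q' Eq lbq'] := split_low _ _ lbq.
have -> : p * q = pihomog mf dp p * pihomog mf dq q +
                  (pihomog mf dp p * q' + p' * q).
  by rewrite addrA -mulrDr -Eq -mulrDl -Ep.
rewrite pihomogD pihomog_dE; last by apply: dhomogM; apply: pihomogP.
rewrite (@pihomog_mf_gt _ (_ + _)) ?addr0 // => m /msuppD_le; rewrite mem_cat.
case/orP=> [/(mf_msuppM_ge (low_ge _ _) lbq')|/(mf_msuppM_ge lbp' lbq)].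
  by rewrite addnS.
by rewrite addSn.
Qed.

Lemma pihomog0M p q : pihomog mf 0 (p * q) = pihomog mf 0 p * pihomog mf 0 q.
Proof. exact: (@pihomogM_min 0 0). Qed.

Lemma pihomog0X p k : pihomog mf 0 (p ^+ k) = pihomog mf 0 p ^+ k.
Proof.
elim: k => [|k IHk]; last by rewrite !exprS pihomog0M IHk.
by rewrite !expr0 pihomog_dE //; apply: dhomog1.
Qed.

End MeasureGrading.

Section MeasureGradingIdomain.
Variables (n : nat) (R : idomainType) (mf : measure n).
Implicit Types (p f : {mpoly R[n]}) (m : 'X_{1..n}).

Lemma msuppM_pihomog0 p f : p != 0 -> pihomog mf 0 f != 0 ->
  exists a b, [/\ a \in msupp p, mf b = 0%N & (a + b)%MM \in msupp (p * f)].
Proof.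
move=> p0 f0.
have wtp : exists k, has (fun m => mf m == k) (msupp p).
  by exists (mf (mlead p)); apply/hasP; exists (mlead p); rewrite ?mlead_supp.
case: (ex_minnP wtp) => dl /hasP[m0 m0p /eqP m0dl] dl_min.
have lbp : {in msupp p, forall m, dl <= mf m}%N.
  by move=> m mp; apply: dl_min; apply/hasP; exists m.
have pl0 : pihomog mf dl p != 0.
  apply/negP => /eqP pl0.
  by have := msupp_pihomog mf dl p m0; rewrite pl0 msupp0 m0dl eqxx m0p.
have := pihomogM_min lbp (fun m _ => leq0n (mf m)); rewrite addn0 => low_pf.
have /mlead_supp : pihomog mf dl (p * f) != 0 by rewrite low_pf mulf_neq0.
set c := mlead _ => c_low; have := c_low; rewrite msupp_pihomog => /andP[_ c_pf].
move: c_low; rewrite low_pf => /msuppM_le/allpairsP[[a b] [/= a_low b_low c_ab]].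
move: a_low b_low; rewrite !msupp_pihomog => /andP[_ ap] /andP[/eqP b0 _].
by exists a, b; rewrite -c_ab.
Qed.

Lemma msuppM_cancel (E : 'X_{1..n} -> Prop) p f :
  (forall m m', E m -> (m <= m')%MM -> E m') ->
  (forall a b, mf b = 0%N -> E (a + b)%MM -> E a) ->
  pihomog mf 0 f != 0 ->
  {in msupp (p * f), forall m, E m} -> {in msupp p, forall m, E m}.
Proof.
move=> E_up E_cancel f0 Epf.
(* The part [pout] of [p] outside [E] still has [pout * f] supported in [E];
   a lowest-weight monomial of [pout * f] then puts a monomial of [pout] in [E]. *)
pose Eb : pred 'X_{1..n} := fun m => excluded_middle_informative (E m).
have EbP m : reflect (E m) (Eb m) := sumboolP _.
set pout := mfilter (predC Eb) p.
suff /eqP pout0 : pout == 0.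
  move=> m mp; apply/EbP; apply: contraT => mNE.
  by have := msupp_mfilter (predC Eb) p m; rewrite -/pout pout0 msupp0 /= mNE mp.
apply: contraT => /msuppM_pihomog0/(_ f0)[a [b [a_out b0 ab_poutf]]].
move: a_out; rewrite msupp_mfilter => /andP[/negP aNE _].
exfalso; apply/aNE/EbP/(E_cancel a b b0).
have : (a + b)%MM \in msupp (p * f - mfilter Eb p * f).
  by rewrite {1}(mfilter_split Eb p) mulrDl addrAC subrr add0r.
move/msuppB_le; rewrite mem_cat => /orP[/Epf //|].
move/msuppM_le/allpairsP => [[a' b'] [/= a'_in _ ->]].
move: a'_in; rewrite msupp_mfilter => /andP[/EbP Ea' _].
exact: E_up Ea' (lem_addr _ _).
Qed.

End MeasureGradingIdomain.

Section MonomialIdeals.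
Variables (n : nat) (R : comNzRingType).
Implicit Types (G : 'X_{1..n} -> Prop) (m : 'X_{1..n}) (x : {mpoly R[n]}).

Definition in_mideal G m := exists2 g, G g & (g <= m)%MM.

Definition mideal G : {mpoly R[n]} -> Prop :=
  gen_ideal (fun p => exists2 m, G m & p = 'X_[m]).

Lemma mideal_is_ideal G : is_ideal (mideal G).
Proof. exact: gen_ideal_is_ideal. Qed.

Lemma in_mideal_le G m m' : in_mideal G m -> (m <= m')%MM -> in_mideal G m'.
Proof. by move=> [g Gg le_gm] le_mm'; exists g => //; apply: lepm_trans le_mm'. Qed.

Lemma midealP G x : mideal G x <-> {in msupp x, forall m, in_mideal G m}.
Proof.
split=> [|Gx].
  move/(_ (fun x => {in msupp x, forall m, in_mideal G m})); apply; last first.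
    by move=> _ [m Gm ->] _ /mem_msuppXP <-; exists m => //; apply: lepm_refl.
  split=> [m|u v Gu Gv m /msuppD_le|r u Gu m /msuppM_le/allpairsP[[m1 m2] [/= _ m2u ->]]].
  - by rewrite msupp0.
  - by rewrite mem_cat => /orP[/Gu|/Gv].
  - exact: in_mideal_le (Gu _ m2u) (lem_addl _ _).
have [_ _ IM] := mideal_is_ideal G.
rewrite [x]mpolyE; apply: ideal_sum; first exact: mideal_is_ideal.
move=> m /Gx[g Gg le_gm]; rewrite -{2}(submK le_gm) mpolyXD scalerAl.
by apply: IM; apply: mem_gen_ideal; exists g.
Qed.

End MonomialIdeals.

Section SubsetWeight.
Variable n : nat.
Implicit Types (S : {set 'I_n}) (m u : 'X_{1..n}).

Definition wt S m := (\sum_(i in S) m i)%N.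

Lemma wt0 S : wt S 0%MM = 0%N.
Proof. by rewrite /wt big1 // => i _; rewrite mnm0E. Qed.

Lemma wtD S : {morph wt S : m1 m2 / (m1 + m2)%MM >-> (m1 + m2)%N}.
Proof. by move=> m1 m2; rewrite /wt -big_split; apply: eq_bigr => i _; rewrite mnmDE. Qed.

HB.instance Definition _ S := isMeasure.Build n (wt S) (wt0 S) (wtD S).

Lemma leq_coord_wt S m i : i \in S -> (m i <= wt S m)%N.
Proof. by move=> iS; rewrite /wt (bigD1 i) //= leq_addr. Qed.

Lemma wt_setT m : wt [set: 'I_n] m = mdeg m.
Proof. by rewrite mdegE /wt; apply: eq_bigl => i; rewrite inE. Qed.

Definition mnm_compl S N : 'X_{1..n} := [multinom if i \in S then 0%N else N | i < n].

Lemma mnm_complD S N N' : (mnm_compl S N + mnm_compl S N')%MM = mnm_compl S (N + N').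
Proof. by apply/mnmP => i; rewrite mnmDE !mnmE; case: (i \in S). Qed.

Lemma mnm_compl_mono S : {homo mnm_compl S : N N' / (N <= N')%N >-> (N <= N')%MM}.
Proof. by move=> N N' le_NN'; apply/mnm_lepP => i; rewrite !mnmE; case: (i \in S). Qed.

Lemma wt_eq0_le_compl S m : wt S m = 0%N -> (m <= mnm_compl S (mdeg m))%MM.
Proof.
move=> wt0m; apply/mnm_lepP => i; rewrite mnmE; case: ifP => [/(leq_coord_wt m)|_].
  by rewrite wt0m.
by rewrite -wt_setT leq_coord_wt ?inE.
Qed.

Definition below u N : {set 'I_n} := [set i | (u i < N)%N].

Lemma mnm_compl_below u N : (mnm_compl (below u N) N <= u)%MM.
Proof. by apply/mnm_lepP => i; rewrite mnmE inE; case: ltnP. Qed.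

Lemma wt_below u N : (wt (below u N) u <= n * N)%N.
Proof.
apply: (@leq_trans (#|below u N| * N)).
  by rewrite -sum_nat_const; apply: leq_sum => i; rewrite inE => /ltnW.
by rewrite leq_mul2r -[X in (_ <= X)%N]card_ord max_card orbT.
Qed.

Lemma in_mideal_compl_mono G S a N N' : (N <= N')%N ->
  in_mideal G (a + mnm_compl S N)%MM -> in_mideal G (a + mnm_compl S N')%MM.
Proof.
move=> le_NN' /in_mideal_le; apply; apply/mnm_lepP => i; rewrite !mnmDE leq_add2l.
exact: mnm_lepP (mnm_compl_mono S le_NN') i.
Qed.

End SubsetWeight.

Section Saturation.
Variables (K : fieldType) (n : nat) (f : {mpoly K[n]}).
Implicit Types (G : 'X_{1..n} -> Prop) (S : {set 'I_n}) (a m u : 'X_{1..n}).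
Implicit Types (x y z : {mpoly K[n]}).

Lemma principal_sub_calJ y : principal f y -> calJ f y.
Proof.
case/principal_multiple => r -> k _; exists k; rewrite exprMn.
have [_ _ IM] := @mideal_is_ideal _ K (fun m => m \in msupp (f ^+ k)).
by apply: IM; apply/midealP => m mfk; exists m => //; apply: lepm_refl.
Qed.

Lemma calJ_pihomog0 S y :
  calJ f y -> pihomog (wt S) 0 f == 0 -> pihomog (wt S) 0 y == 0.
Proof.
move=> /(_ 1%N isT)[e]; rewrite expr1 => /midealP Jye; rewrite !pihomog_eq0 => /allP f0.
suff : pihomog (wt S) 0 (y ^+ e) == 0.
  by rewrite pihomog0X expf_eq0 pihomog_eq0 => /andP[].
rewrite pihomog_eq0; apply/allP => m /Jye[g /f0 wtg le_gm] /=.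
by rewrite -lt0n (leq_trans _ (mf_mono (wt S) le_gm)) // lt0n.
Qed.

(* [pihomog (wt S) 0 p] is the residue of [p] modulo the prime (X_i : i \in S),
   so [high_wt] quantifies over the monomial primes containing [f]. *)
Definition high_wt j u := forall S, pihomog (wt S) 0 f == 0 -> (j <= wt S u)%N.

Lemma high_wt_calJ y m : calJ f y -> m \in msupp y -> high_wt 1 m.
Proof.
move=> Jy my S /(calJ_pihomog0 Jy); rewrite pihomog_eq0 => /allP/(_ m my).
by rewrite lt0n.
Qed.

Lemma high_wtD i j u v : high_wt i u -> high_wt j v -> high_wt (i + j) (u + v)%MM.
Proof. by move=> hu hv S f0; rewrite mfD leq_add ?hu ?hv. Qed.

Lemma in_mideal_high_wt G N a u :
  (forall S, pihomog (wt S) 0 f != 0 -> in_mideal G (a + mnm_compl S N)%MM) ->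
  high_wt (n * N).+1 u -> in_mideal G (a + u)%MM.
Proof.
move=> Ga hu; have [/eqP f0|fS] := eqVneq (pihomog (wt (below u N)) 0 f) 0.
  by have := hu _ f0; rewrite ltnNge wt_below.
apply: in_mideal_le (Ga _ fS) _; apply/mnm_lepP => i; rewrite !mnmDE leq_add2l.
exact: mnm_lepP (mnm_compl_below u N) i.
Qed.

Lemma colon_calJ_pow G i z :
  {in msupp z, forall m u, high_wt i u -> in_mideal G (m + u)%MM} ->
  colon (mideal G) (ideal_pow (calJ f) i) z.
Proof.
elim: i z => [|i IHi] z Gz.
  apply: colon_pow0; first exact: mideal_is_ideal.
  by apply/midealP => m /Gz /(_ 0%MM (fun _ _ => leq0n _)); rewrite addm0.
apply: colon_powS; first exact: mideal_is_ideal.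
move=> y Jy; apply: IHi => _ /msuppM_le/allpairsP[[m1 m2] [/= m1z m2y ->]] u hu.
by rewrite -addmA; apply: Gz => //; apply: (high_wtD (high_wt_calJ Jy m2y)).
Qed.

Lemma saturation_calJ_principal I x :
  saturation I (calJ f) x -> saturation I (principal f) x.
Proof. by case=> k Hk; exists k => y /(ideal_pow_mono principal_sub_calJ); apply: Hk. Qed.

Lemma exists_compl_bound G S k x :
  pihomog (wt S) 0 f != 0 -> {in msupp (x * f ^+ k), forall m, in_mideal G m} ->
  {in msupp x, forall a, exists N, in_mideal G (a + mnm_compl S N)%MM}.
Proof.
move=> f0 Gxf; apply: (msuppM_cancel (mf := wt S) (f := f ^+ k)).
- move=> m m' [N GmN] le_mm'; exists N; apply: in_mideal_le GmN _.
  by apply/mnm_lepP => i; rewrite !mnmDE leq_add2r; apply: mnm_lepP.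
- move=> m b /= wtb0 [N GmbN]; exists (mdeg b + N)%N; apply: in_mideal_le GmbN _.
  rewrite -mnm_complD addmA; apply/mnm_lepP => i; rewrite !mnmDE leq_add2r leq_add2l.
  exact: mnm_lepP (wt_eq0_le_compl wtb0) i.
- by rewrite pihomog0X expf_neq0.
- by move=> m /Gxf Gm; exists 0%N; apply: in_mideal_le Gm (lem_addr _ _).
Qed.

Lemma saturation_principal_calJ G x :
  saturation (mideal G) (principal f) x -> saturation (mideal G) (calJ f) x.
Proof.
case=> k Gxfk; have /midealP Gxf := Gxfk _ (ideal_pow_principal f k).
have [N GxN] : exists N, {in enum {set 'I_n}, forall S, pihomog (wt S) 0 f != 0 ->
    {in msupp x, forall a, in_mideal G (a + mnm_compl S N)%MM}}.
  apply: common_bound => [S N N' le_NN' GN fS a xa|S _].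
    exact: in_mideal_compl_mono le_NN' (GN fS a xa).
  have [f0|fS] := eqVneq (pihomog (wt S) 0 f) 0; first by exists 0%N.
  have [N GN] := common_bound (in_mideal_compl_mono (G := G) (S := S))
                               (exists_compl_bound fS Gxf).
  by exists N.
exists (n * N).+1; apply: colon_calJ_pow => a xa u; apply: in_mideal_high_wt => S fS.
by apply: GxN; rewrite ?mem_enum.
Qed.

End Saturation.

Theorem lemma6p3 (K : fieldType) (d : nat) (f : {mpoly K[d]}) :
  f != 0 ->
  forall I : {mpoly K[d]} -> Prop,
    monomial_ideal I ->
    forall x : {mpoly K[d]},
      saturation I (principal f) x <-> saturation I (calJ f) x.
Proof.
move=> _ I [G IG] x; split=> [|/saturation_calJ_principal //].
by move/(saturation_ext _ _ IG)/saturation_principal_calJ/(saturation_ext _ _ IG).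
Qed.
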